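(* Let $\Gamma$ be a finite connected graph and $f_1$ an eigenfunction of its normalized Laplacian for the eigenvalue $1$. Partition the vertex set of $\Gamma$ into sets $\Sigma_0,\Sigma_1,\Sigma_2$ such that no edge of $\Gamma$ joins a vertex of $\Sigma_1$ to a vertex of $\Sigma_2$. Assign each edge of $\Gamma$ with both endpoints in $\Sigma_0$ to exactly one of two classes $E_1,E_2$. Let $\Gamma_1$ be the graph with vertex set $\Sigma_1\cup\Sigma_0$ whose edges are the edges of $\Gamma$ with at least one endpoint in $\Sigma_1$ and both endpoints in $\Sigma_1\cup\Sigma_0$, together with $E_1$; let $\Gamma_2$ be a disjoint graph with vertex set a copy of $\Sigma_2\cup\Sigma_0$ whose edges are the (copies of) edges of $\Gamma$ with at least one endpoint in $\Sigma_2$ and both endpoints in $\Sigma_2\cup\Sigma_0$, together with (copies of) $E_2$. Form $\Gamma_0$ from the disjoint union of $\Gamma_1$ and $\Gamma_2$ by adding, for each $q\in\Sigma_0$, a new vertex $w_q$ joined by edges to the copy of $q$ in $\Gamma_1$ and to the copy of $q$ in $\Gamma_2$. Then $1$ is an eigenvalue of the normalized Laplacian of $\Gamma_0$, with an eigenfunction that agrees with $f_1$ on $\Gamma_1$.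
   Context: For a finite simple graph without isolated vertices, write $i\sim j$ for adjacency and $n_i$ for the degree of $i$. The normalized Laplacian acts on real functions $v$ on the vertices by $\Delta v(i)=v(i)-\frac{1}{n_i}\sum_{j\sim i}v(j)$; $\lambda$ is an eigenvalue with eigenfunction $u$ if $u\not\equiv 0$ and $\frac{1}{n_i}\sum_{j\sim i}u(j)=(1-\lambda)u(i)$ for all $i$. For $\lambda=1$ this says $\sum_{j\sim i}u(j)=0$ for all $i$. *)

From mathcomp Require Import all_boot all_order all_algebra.
Set Implicit Arguments. Unset Strict Implicit. Unset Printing Implicit Defensive.
Import Order.TTheory GRing.Theory Num.Theory.
Local Open Scope ring_scope.

Definition simple_graph (V : finType) (adj : rel V) : Prop :=
  symmetric adj /\ irreflexive adj.

Definition no_isolated (V : finType) (adj : rel V) : Prop :=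
  forall i, exists j, adj i j.

Definition connected_graph (V : finType) (adj : rel V) : Prop :=
  forall x y, connect adj x y.

Definition deg (V : finType) (adj : rel V) (i : V) : nat := #|[pred j | adj i j]|.

Definition nlap_eigenfun (R : realFieldType) (V : finType) (adj : rel V)
    (lam : R) (u : V -> R) : Prop :=
  (exists i, u i != 0) /\
  forall i, ((deg adj i)%:R)^-1 * (\sum_(j | adj i j) u j) = (1 - lam) * u i.

Definition V1 (T : finType) (S0 S1 : {set T}) := {x : T | x \in S1 :|: S0}.
Definition V2 (T : finType) (S0 S2 : {set T}) := {x : T | x \in S2 :|: S0}.
Definition W0 (T : finType) (S0 : {set T}) := {x : T | x \in S0}.

(* Vertex set of Gamma_0: copy of Sigma_1 u Sigma_0 (Gamma_1), copy of
   Sigma_2 u Sigma_0 (Gamma_2), and the new vertices w_q, q in Sigma_0. *)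
Definition V0 (T : finType) (S0 S1 S2 : {set T}) : finType :=
  ((V1 S0 S1 + V2 S0 S2) + W0 S0)%type.

(* E1 : the class-1 edges among the edges inside Sigma_0; the remaining
   edges inside Sigma_0 form E2. *)
Definition adj0 (T : finType) (e : rel T) (S0 S1 S2 : {set T}) (E1 : rel T)
    (x y : V0 S0 S1 S2) : bool :=
  match x, y with
  | inl (inl a), inl (inl b) =>
      e (val a) (val b) && [|| val a \in S1, val b \in S1 | E1 (val a) (val b)]
  | inl (inr a), inl (inr b) =>
      e (val a) (val b) &&
      [|| val a \in S2, val b \in S2 |
          [&& val a \in S0, val b \in S0 & ~~ E1 (val a) (val b)]]
  | inl (inl a), inr q => val a == val q
  | inr q, inl (inl a) => val a == val q
  | inl (inr a), inr q => val a == val q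
  | inr q, inl (inr a) => val a == val q
  | _, _ => false
  end.

From mathcomp Require Import all_boot all_order all_algebra.
Import Order.TTheory GRing.Theory Num.Theory.
Local Open Scope ring_scope.

(* Eigenvalue 1 means f1 is nonzero with vanishing sums over neighbourhoods.
   For q in Sigma_0 the neighbours of q split into those of Gamma_1 and those of
   Gamma_2, so the two partial sums s1(q), s2(q) of f1 add up to 0, whereas at a
   vertex of Sigma_1 (resp. Sigma_2) the partial sum s1 (resp. s2) is the full
   sum, hence 0.  Take g = f1 on Gamma_1, g = -f1 on Gamma_2 and g(w_q) = -s1(q):
   at a copy of q the edge to w_q contributes -s1(q), cancelling s1(q) in Gamma_1
   and -s2(q) = s1(q) in Gamma_2, and at w_q the two copies give f1 q - f1 q. *)

Lemma nlap_eigenfun1_sum {R : realFieldType} {V : finType} {adj : rel V}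
    {u : V -> R} :
  no_isolated adj -> nlap_eigenfun adj 1 u ->
  forall i, \sum_(j | adj i j) u j = 0.
Proof.
move=> adj_nisol [_ eig] i; have := eig i; rewrite subrr mul0r.
have [j adj_ij] := adj_nisol i.
have deg_gt0 : (0 < deg adj i)%N by apply/card_gt0P; exists j.
by move/eqP; rewrite mulf_eq0 invr_eq0 pnatr_eq0 eqn0Ngt deg_gt0 => /eqP.
Qed.

Lemma nlap_eigenfun1_of_sum {R : realFieldType} {V : finType} {adj : rel V}
    {u : V -> R} :
  (exists i, u i != 0) -> (forall i, \sum_(j | adj i j) u j = 0) ->
  nlap_eigenfun adj 1 u.
Proof. by move=> u_neq0 sum0; split=> // i; rewrite sum0 subrr !mulr0 mul0r. Qed.

Lemma big_sub_pred1 (R : nmodType) (T : finType) (A : {set T}) (a : T)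
    (F : T -> R) :
  \sum_(b : {x | x \in A} | val b == a) F (val b) = if a \in A then F a else 0.
Proof. by rewrite -(big_sub_cond (mem A) (pred1 a)) big_mkcondl big_pred1_eq. Qed.

Section Gluing.

Variables (R : realFieldType) (T : finType) (e : rel T).
Variables (S0 S1 S2 : {set T}) (E1 : rel T).
Hypothesis e_sym : symmetric e.
Hypothesis S_cover : S0 :|: S1 :|: S2 = setT.
Hypotheses (S01 : [disjoint S0 & S1]) (S02 : [disjoint S0 & S2]).
Hypothesis S12 : [disjoint S1 & S2].
Hypothesis no_edge12 : forall x y, x \in S1 -> y \in S2 -> ~~ e x y.
Hypothesis E1_S0 : forall a b, E1 a b -> b \in S0.

Variant part_spec : bool -> bool -> bool -> Set :=
  | InS0 : part_spec true false false
  | InS1 : part_spec false true false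
  | InS2 : part_spec false false true.

Lemma partP y : part_spec (y \in S0) (y \in S1) (y \in S2).
Proof.
case: (boolP (y \in S0)) => [y0|y0'].
  by rewrite (disjointFr S01 y0) (disjointFr S02 y0); constructor.
case: (boolP (y \in S1)) => [y1|y1'].
  by rewrite (disjointFr S12 y1); constructor.
have := in_setT y; rewrite -S_cover !inE (negbTE y0') (negbTE y1') /= => ->.
by constructor.
Qed.

Lemma nbr_S1 {a b} : a \in S1 -> e a b -> b \in S1 :|: S0.
Proof.
move=> a1 eab; have := no_edge12 a b a1.
by rewrite !inE; case: (partP b) => // /(_ isT); rewrite eab.
Qed.

Lemma nbr_S2 {a b} : a \in S2 -> e a b -> b \in S2 :|: S0.
Proof.
move=> a2 eab; have := no_edge12 b a ^~ a2.
by rewrite !inE e_sym eab; case: (partP b) => // /(_ isT).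
Qed.

Definition adj1 (a b : T) : bool := e a b && [|| a \in S1, b \in S1 | E1 a b].
Definition adj2 (a b : T) : bool :=
  e a b && [|| a \in S2, b \in S2 | [&& a \in S0, b \in S0 & ~~ E1 a b]].

Variable f1 : T -> R.
Hypotheses (e_nisol : no_isolated e) (f1_eig : nlap_eigenfun e 1 f1).

Let f1_sum := nlap_eigenfun1_sum e_nisol f1_eig.

Definition nbr_sum1 (q : T) : R := \sum_(b in S1 :|: S0 | adj1 q b) f1 b.
Definition nbr_sum2 (q : T) : R := \sum_(b in S2 :|: S0 | adj2 q b) f1 b.

Lemma nbr_sum1_S1 a : a \in S1 -> nbr_sum1 a = 0.
Proof.
move=> a1; rewrite -(f1_sum a); apply: eq_bigl => b; rewrite /adj1 a1 andbT.
by case eab: (e a b); rewrite ?andbF // (nbr_S1 a1 eab).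
Qed.

Lemma nbr_sum2_S2 a : a \in S2 -> nbr_sum2 a = 0.
Proof.
move=> a2; rewrite -(f1_sum a); apply: eq_bigl => b; rewrite /adj2 a2 andbT.
by case eab: (e a b); rewrite ?andbF // (nbr_S2 a2 eab).
Qed.

Lemma nbr_sums_S0 a : a \in S0 -> nbr_sum1 a + nbr_sum2 a = 0.
Proof.
move=> a0; rewrite -(f1_sum a) (bigID (fun b => (b \in S1) || E1 a b)) /=.
congr (_ + _); apply: eq_bigl => b; rewrite /adj1 /adj2 !inE;
  case: (partP a) a0 => // _; case: (partP b) (@E1_S0 a b) => //=.
all: by case: (E1 a b) => [/(_ isT) | _]; rewrite ?andbF ?andbT.
Qed.

Definition glued (x : V0 S0 S1 S2) : R :=
  match x with
  | inl (inl a) => f1 (val a)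
  | inl (inr a) => - f1 (val a)
  | inr q => - nbr_sum1 (val q)
  end.

Lemma glued_sum_V1 (a : V1 S0 S1) :
  \sum_(y | adj0 e E1 (inl (inl a)) y) glued y = 0.
Proof.
rewrite !big_sumType /= big_pred0_eq addr0 sumrN.
rewrite -(big_sub_cond (mem (S1 :|: S0)) (adj1 (val a)) f1) -/(nbr_sum1 (val a)).
under eq_bigl do rewrite eq_sym.
rewrite big_sub_pred1; case: a => /= a; rewrite inE.
case: (partP a) (@nbr_sum1_S1 a) => //= [_ _ | /(_ isT) -> _].
- by rewrite subrr.
- by rewrite subr0.
Qed.

Lemma glued_sum_V2 (a : V2 S0 S2) :
  \sum_(y | adj0 e E1 (inl (inr a)) y) glued y = 0.
Proof.
rewrite !big_sumType /= big_pred0_eq add0r !sumrN.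
rewrite -(big_sub_cond (mem (S2 :|: S0)) (adj2 (val a)) f1) -/(nbr_sum2 (val a)).
under eq_bigl do rewrite eq_sym.
rewrite big_sub_pred1; case: a => /= a; rewrite inE.
case: (partP a) (@nbr_sum2_S2 a) (@nbr_sums_S0 a)
  => //= [_ /(_ isT) sum12 _ | /(_ isT) -> _ _].
- by rewrite -opprD addrC sum12 oppr0.
- by rewrite oppr0 addr0.
Qed.

Lemma glued_sum_W0 (q : W0 S0) :
  \sum_(y | adj0 e E1 (inr q) y) glued y = 0.
Proof.
rewrite !big_sumType /= big_pred0_eq addr0 sumrN !big_sub_pred1.
by case: q => /= q; rewrite !inE => ->; rewrite !orbT subrr.
Qed.

Lemma glued_sum x : \sum_(y | adj0 e E1 x y) glued y = 0.
Proof.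
case: x => [[a | a] | q];
  [exact: glued_sum_V1 | exact: glued_sum_V2 | exact: glued_sum_W0].
Qed.

Lemma glued_neq0 : exists x, glued x != 0.
Proof.
have [i f1i] := f1_eig.1.
have [i10 | i2] : (i \in S1 :|: S0) \/ (i \in S2).
  by rewrite inE; case: (partP i); [left | left | right].
- by exists (inl (inl (exist _ i i10))).
- have i20 : i \in S2 :|: S0 by rewrite inE i2.
  by exists (inl (inr (exist _ i i20))); rewrite /= oppr_eq0.
Qed.

Lemma glued_eigenfun : nlap_eigenfun (adj0 e E1) 1 glued.
Proof. exact: nlap_eigenfun1_of_sum glued_neq0 glued_sum. Qed.

End Gluing.

Theorem theorem5 (R : realFieldType) (T : finType) (e : rel T)
  (He : simple_graph e) (Hni : no_isolated e) (Hconn : connected_graph e)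
  (f1 : T -> R) (Hf1 : nlap_eigenfun e 1 f1)
  (S0 S1 S2 : {set T})
  (Hcover : S0 :|: S1 :|: S2 = setT)
  (H01 : [disjoint S0 & S1]) (H02 : [disjoint S0 & S2]) (H12 : [disjoint S1 & S2])
  (Hno12 : forall x y, x \in S1 -> y \in S2 -> ~~ e x y)
  (E1 : rel T) (HE1sym : symmetric E1)
  (HE1 : forall x y, E1 x y -> [&& e x y, x \in S0 & y \in S0]) :
  exists g : V0 S0 S1 S2 -> R,
    nlap_eigenfun (adj0 e E1) 1 g /\
    forall a : V1 S0 S1, g (inl (inl a)) = f1 (val a).
Proof.
exists (glued R T e S0 S1 S2 E1 f1); split=> //.
by apply: glued_eigenfun => // [|x y /HE1/and3P[]]; case: He.
Qed.
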